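(* Let $\eta^{(\varepsilon)}(t)$, $\varepsilon\in(0,1]$, be semi-Markov processes on $\mathbb{X}=\{1,\dots,N\}$ built from Markov renewal processes as in the context, satisfying condition A of the context and conditions B and C of the context for some $\varepsilon_0\in(0,1]$. Fix $r\in\mathbb{X}$, assume $\mathsf P\{\eta^{(\varepsilon)}_0=r\}=0$, and let $_r\eta^{(\varepsilon)}(t)$ be the reduced semi-Markov process on $_r\mathbb{X}=\mathbb{X}\setminus\{r\}$ with transition probabilities $_rQ^{(\varepsilon)}_{ij}(t)$ and expectations $_re_{ij}(\varepsilon)=\int_0^\infty t\,{}_rQ^{(\varepsilon)}_{ij}(dt)$. Then conditions B and C hold for $_r\eta^{(\varepsilon)}(t)$: $_rQ^{(\varepsilon)}_{ij}(0)=0$ and $_re_{ij}(\varepsilon)<\infty$ for all $i,j\in{}_r\mathbb{X}$, $\varepsilon\in(0,\varepsilon_0]$.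
   Context: For $\varepsilon\in(0,1]$, $(\eta^{(\varepsilon)}_n,\kappa^{(\varepsilon)}_n)$, $n\ge0$, is a homogeneous Markov chain on $\mathbb{X}\times[0,\infty)$, $\kappa^{(\varepsilon)}_0=0$, with transition probabilities $Q^{(\varepsilon)}_{ij}(t)=\mathsf P\{\eta^{(\varepsilon)}_1=j,\kappa^{(\varepsilon)}_1\le t\mid\eta^{(\varepsilon)}_0=i,\kappa^{(\varepsilon)}_0=s\}$ not depending on $s$; $p_{ij}(\varepsilon)=Q^{(\varepsilon)}_{ij}(\infty)$; $e_{ij}(\varepsilon)=\int_0^\infty t\,Q^{(\varepsilon)}_{ij}(dt)$; the semi-Markov process is $\eta^{(\varepsilon)}(t)=\eta^{(\varepsilon)}_{\nu^{(\varepsilon)}(t)}$, $\nu^{(\varepsilon)}(t)=\max\{n\ge0:\kappa^{(\varepsilon)}_1+\dots+\kappa^{(\varepsilon)}_n\le t\}$. Condition A: there exist $\mathbb{Y}_i\subseteq\mathbb{X}$ and $\varepsilon_0\in(0,1]$ such that for $\varepsilon\in(0,\varepsilon_0]$: $p_{ij}(\varepsilon)>0$ for $j\in\mathbb{Y}_i$, $p_{ij}(\varepsilon)=0$ for $j\notin\mathbb{Y}_i$, and for every $i,j$ there exist $n\ge1$, $i=l_0,\dots,l_n=j$ with $l_{k+1}\in\mathbb{Y}_{l_k}$. Condition B: $Q^{(\varepsilon)}_{ij}(0)=0$ for all $i,j$, $\varepsilon\in(0,\varepsilon_0]$. Condition C: $e_{ij}(\varepsilon)<\infty$ for all $i,j$,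 $\varepsilon\in(0,\varepsilon_0]$. Reduced process: $_r\xi_0=0$, $_r\xi_n=\min\{k>{}_r\xi_{n-1}:\eta^{(\varepsilon)}_k\in{}_r\mathbb{X}\}$, $_r\eta^{(\varepsilon)}_n=\eta^{(\varepsilon)}_{_r\xi_n}$, $_r\kappa^{(\varepsilon)}_0=0$, $_r\kappa^{(\varepsilon)}_n=\sum_{k={}_r\xi_{n-1}+1}^{_r\xi_n}\kappa^{(\varepsilon)}_k$; this is a Markov renewal process on $_r\mathbb{X}\times[0,\infty)$ with transition probabilities $_rQ^{(\varepsilon)}_{ij}(t)=\mathsf P\{{}_r\eta^{(\varepsilon)}_1=j,{}_r\kappa^{(\varepsilon)}_1\le t\mid{}_r\eta^{(\varepsilon)}_0=i\}$, and $_r\eta^{(\varepsilon)}(t)$ is its semi-Markov process. *)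

From HB Require Import structures.
From mathcomp Require Import all_boot all_order all_algebra.
From mathcomp Require Import all_classical all_reals all_analysis.
Set Implicit Arguments. Unset Strict Implicit. Unset Printing Implicit Defensive.
Import Order.TTheory GRing.Theory Num.Theory.
Local Open Scope classical_set_scope.
Local Open Scope ring_scope.

Section Defs.
Variable R : realType.
Variable N : nat.

(* A semi-Markov kernel on X = 'I_N: Q i j is the measure Q_ij(dt) on R
   (Q_ij(t) = Q i j `]-oo, t]`), concentrated on [0,+oo), with
   sum_j p_ij = 1 where p_ij = Q i j setT. *)
Definition semi_markov_kernel (Q : 'I_N -> 'I_N -> {measure set R -> \bar R}) : Prop :=
  (forall i j, Q i j `]-oo, 0[%classic = 0%E) /\
  (forall i, (\sum_(j < N) Q i j setT = 1)%E).

Definition MRP_started (d : measure_display) (T : measurableType d)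
  (P : probability T R) (Q : 'I_N -> 'I_N -> {measure set R -> \bar R})
  (i : 'I_N) (eta : nat -> T -> 'I_N) (kappa : nat -> T -> R) : Prop :=
  [/\ (forall n j, measurable (eta n @^-1` [set j])),
      (forall n, measurable_fun setT (kappa n)),
      (forall w, kappa 0%N w = 0),
      (forall n w, 0 <= kappa n w) &
      (forall (n : nat) (l : nat -> 'I_N) (A : nat -> set R),
          l 0%N = i -> (forall k, measurable (A k)) ->
          P [set w | eta 0%N w = i /\
                     forall k, (0 < k <= n)%N -> eta k w = l k /\ A k (kappa k w)]
          = (\prod_(1 <= k < n.+1) Q (l k.-1) (l k) (A k))%E)].

(* The reduced (r-excluded) embedded process: rxi_1 = min{k > 0 : eta_k != r}
   (0 encodes "no such k"), reta_1 = eta_(rxi_1), rkappa_1 = kappa_1 + ... + kappa_(rxi_1). *)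
Definition first_exit (T : Type) (eta : nat -> T -> 'I_N) (r : 'I_N) (w : T) (n : nat) : Prop :=
  (0 < n)%N /\ eta n w <> r /\ forall k, (0 < k < n)%N -> eta k w = r.

Definition red_xi1 (T : Type) (eta : nat -> T -> 'I_N) (r : 'I_N) (w : T) : nat :=
  xget 0%N (first_exit eta r w).

Definition red_eta1 (T : Type) (eta : nat -> T -> 'I_N) (r : 'I_N) (w : T) : 'I_N :=
  eta (red_xi1 eta r w) w.

Definition red_kappa1 (T : Type) (eta : nat -> T -> 'I_N) (kappa : nat -> T -> R)
  (r : 'I_N) (w : T) : R :=
  \sum_(1 <= k < (red_xi1 eta r w).+1) kappa k w.

Definition red_event (T : Type) (eta : nat -> T -> 'I_N) (r j : 'I_N) : set T :=
  [set w | (0 < red_xi1 eta r w)%N /\ red_eta1 eta r w = j].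

Definition red_Q (d : measure_display) (T : measurableType d) (P : probability T R)
  (eta : nat -> T -> 'I_N) (kappa : nat -> T -> R) (r j : 'I_N) (A : set R) : \bar R :=
  P (red_event eta r j `&` [set w | A (red_kappa1 eta kappa r w)]).

(* re_ij = int t rQ_ij(dt) = E_i[ rkappa_1 ; reta_1 = j ] *)
Definition red_e (d : measure_display) (T : measurableType d) (P : probability T R)
  (eta : nat -> T -> 'I_N) (kappa : nat -> T -> R) (r j : 'I_N) : \bar R :=
  (\int[P]_(w in red_event eta r j) (red_kappa1 eta kappa r w)%:E)%E.

End Defs.

From HB Require Import structures.
From mathcomp Require Import all_boot all_order all_algebra.
From mathcomp Require Import all_classical all_reals all_analysis.
From mathcomp Require Import measurable_realfun zify lra.
Import Order.TTheory GRing.Theory Num.Theory.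
Local Open Scope classical_set_scope.
Local Open Scope ring_scope.

(* Started at [i != r], the reduced chain collects at least the first sojourn
   [kappa_1], so [rkappa_1 <= 0] forces [kappa_1 <= 0], an event of probability
   [sum_l Q_il(]-oo, 0]) = 0].  For the expectation, [rkappa_1] is dominated by
   [sum_(k >= 1) sum_l kappa_k 1{eta_0 = i, eta_1 = ... = eta_(k-1) = r, eta_k = l}],
   whose k-th term has expectation [p_ir p_rr^(k-2) sum_l e_rl] for [k >= 2].
   Condition A makes [r] reach some state [l != r] with [p_rl > 0], hence
   [p_rr < 1] and the series is geometric. *)

(* No measurability is needed: both integrals are suprema of the integrals of
   the simple functions below the integrand. *)
Lemma ge0_le_integralT d (T : measurableType d) (R : realType)
    (mu : {measure set T -> \bar R}) (f g : T -> \bar R) :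
  (forall x, 0 <= f x)%E -> (forall x, f x <= g x)%E ->
  (\int[mu]_x f x <= \int[mu]_x g x)%E.
Proof.
move=> f0 fg; have g0 x : (0 <= g x)%E by exact: le_trans (fg x).
rewrite !ge0_integralTE//.
by apply: le_ereal_sup => _ [h hf <-]; exists h => //= x; exact: le_trans (hf x) (fg x).
Qed.

Lemma integral_restricted_law d (T : measurableType d) (R : realType)
    (mu : {measure set T -> \bar R}) (nu : {measure set R -> \bar R})
    (G : set T) (f : T -> R) :
  measurable G -> measurable_fun setT f -> (forall w, G w -> 0 <= f w) ->
  (forall A : set R, measurable A -> A `<=` `[0%R, +oo[ ->
     mu (G `&` f @^-1` A) = nu A) ->
  (\int[mu]_(w in G) (f w)%:E = \int[nu]_(t in `[0%R, +oo[%classic) t%:E)%E.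
Proof.
move=> mG mf f_ge0 law.
(* [phi] is [f] on [G] and [-1] off [G]: then [phi @^-1` [0, +oo[ = G] and
   the law of [phi] coincides with [nu] on [[0, +oo[]. *)
pose phi := (f \* \1_G) \+ (\1_G \- cst 1).
have mphi : measurable_fun setT phi.
  apply: measurable_funD; first by apply: measurable_funM => //; exact: measurable_indic.
  by apply: measurable_funB => //; exact: measurable_indic.
have phiG w : w \in G -> phi w = f w.
  by move=> wG; rewrite /phi /= indicE wG mulr1 subrr addr0.
have phiNG w : w \notin G -> phi w = -1.
  by move=> wG; rewrite /phi /= indicE (negbTE wG) mulr0 add0r sub0r.
have phi_preimage A : A `<=` `[0%R, +oo[ -> phi @^-1` A = G `&` f @^-1` A.
  move=> A0; apply/seteqP; split => w /=.
  - move=> hA; have := A0 _ hA; rewrite /= in_itv /= andbT.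
    case: (boolP (w \in G)) => [wG _|/phiNG ->]; last by rewrite leNgt ltrN10.
    by split; [exact: set_mem|rewrite -phiG].
  - by move=> [wG hA]; rewrite phiG ?mem_set.
transitivity (\int[mu]_(w in phi @^-1` `[0%R, +oo[%classic) ((fun y => y%:E) \o phi) w)%E.
  rewrite phi_preimage// (_ : _ `&` _ = G); last first.
    apply/seteqP; split => [w []//|w wG]; split => //.
    by rewrite /= in_itv /= andbT f_ge0.
  by apply: eq_integral => w wG /=; rewrite phiG.
rewrite -(ge0_integral_pushforward mphi)//; last 2 first.
- exact: EFin_measurable.
- by move=> y /[!inE]; rewrite /= in_itv /= andbT lee_fin.
apply: eq_measure_integral => A mA A0.
by rewrite -law// -phi_preimage.
Qed.

Lemma nneseries_lt_pinfty_geometric (R : realType) (u : nat -> \bar R) (c q : R) :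
  0 <= q < 1 -> (forall n, 0 <= u n)%E -> (u 0%N < +oo)%E ->
  (forall n, u n.+1 <= (c * q ^+ n)%:E)%E -> (\sum_(n <oo) u n < +oo)%E.
Proof.
move=> /andP[q0 q1] u0 u0_fin uc.
have c0 : 0 <= c by rewrite -lee_fin -[c]mulr1 -(expr0 q) (le_trans (u0 1%N)).
pose s := (1 + q) / 2.
have s0 : 0 < s by rewrite /s; lra.
have s1 : s < 1 by rewrite /s; lra.
rewrite nneseries_recl// -(nneseries_addn 1); last by [].
apply: lte_add_pinfty => //.
apply: (@le_lt_trans _ _ (\sum_(n <oo) (c * s ^+ n)%:E)%E).
  apply: lee_nneseries => [n _ _|n _]; first exact: u0.
  rewrite addn1; apply: le_trans (uc n) _; rewrite lee_fin ler_wpM2l//.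
  by rewrite lerXn2r// ?nnegrE ?ltW// /s; lra.
apply: (@le_lt_trans _ _ (c * (1 - s)^-1)%:E); last exact: ltry.
apply: lime_le.
  by apply: is_cvg_nneseries => n _ _; rewrite lee_fin mulr_ge0// exprn_ge0// ltW.
apply: nearW => m; rewrite sumEFin lee_fin.
by apply: geometric_le_lim => //; rewrite ger0_norm// ltW.
Qed.

Lemma exists_exit_step {T : eqType} {l : nat -> T} {r : T} {n : nat} :
  l 0%N = r -> l n != r -> exists2 m, (m < n)%N & l m = r /\ l m.+1 != r.
Proof.
move=> l0; elim: n => [|n IHn] ln; first by rewrite l0 eqxx in ln.
have [lnr|lnr] := eqVneq (l n) r; first by exists n.
by have [m mn lm] := IHn lnr; exists m => //; exact: ltnW.
Qed.

Section kernel_mass.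
Context {R : realType} {N : nat} {Q : 'I_N -> 'I_N -> {measure set R -> \bar R}}.
Context {a : 'I_N}.
Hypothesis Qsum : (\sum_(j < N) Q a j setT = 1)%E.

Lemma kernel_mass_le1 b : (Q a b setT <= 1)%E.
Proof.
rewrite -Qsum (bigD1 b)//=; apply: leeDl.
by apply: sume_ge0 => l _; exact: measure_ge0.
Qed.

Lemma kernel_stay_lt1 l : l != a -> (0 < Q a l setT)%E -> fine (Q a a setT) < 1.
Proof.
move=> la Qal_gt0.
have fin b : Q a b setT \is a fin_num.
  by rewrite ge0_fin_numE ?measure_ge0// (le_lt_trans (kernel_mass_le1 b)) ?ltry.
have : (Q a a setT + Q a l setT <= 1)%E.
  rewrite -Qsum (bigD1 a)//= (bigD1 l)//= addeA; apply: leeDl.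
  by apply: sume_ge0 => k _; exact: measure_ge0.
move: Qal_gt0; rewrite -(fineK (fin a)) -(fineK (fin l)) -EFinD lte_fin lee_fin.
lra.
Qed.

End kernel_mass.

Definition trans_mean {R : realType} {N : nat}
    (Q : 'I_N -> 'I_N -> {measure set R -> \bar R}) (a b : 'I_N) : \bar R :=
  (\int[Q a b]_(t in `[0%R, +oo[%classic) t%:E)%E.

Definition path_cylinder {T : Type} {N : nat} (eta : nat -> T -> 'I_N) (i : 'I_N)
    (L : nat -> 'I_N) (k : nat) : set T :=
  [set w | eta 0%N w = i /\ forall m, (0 < m <= k)%N -> eta m w = L m].

Section first_exit.
Context {T : Type} {N : nat} {eta : nat -> T -> 'I_N} {r : 'I_N} {w : T}.

Lemma red_xi1_first_exit :
  (0 < red_xi1 eta r w)%N -> first_exit eta r w (red_xi1 eta r w).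
Proof.
rewrite /red_xi1 => xi_gt0; apply: xgetPex.
case: (pselect (exists n, first_exit eta r w n)) => // noexit.
by move: xi_gt0; rewrite xgetPN ?ltnn// => n exit_n; apply: noexit; exists n.
Qed.

Lemma red_xi1_eq {n : nat} : first_exit eta r w n -> red_xi1 eta r w = n.
Proof.
move=> exit_n; have [n0 [en before_n]] := exit_n.
apply: (xget_unique _ exit_n) => m [m0 [em before_m]].
case: (ltngtP m n) => // [mn|nm]; first by exfalso; apply/em/before_n; rewrite m0.
by exfalso; apply/en/before_m; rewrite n0.
Qed.

End first_exit.

Section measurable_events.
Context {d} {T : measurableType d} {R : realType} {N : nat}.
Context {eta : nat -> T -> 'I_N} {kappa : nat -> T -> R}.
Hypothesis meta : forall n j, measurable (eta n @^-1` [set j]).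
Hypothesis mkappa : forall n, measurable_fun setT (kappa n).

Lemma measurable_path_cylinder i L k : measurable (path_cylinder eta i L k).
Proof.
have -> : path_cylinder eta i L k = eta 0%N @^-1` [set i] `&`
    \bigcap_(m in [set m | (0 < m <= k)%N]) eta m @^-1` [set L m].
  by apply/seteqP; split => w [e0 em]; split.
by apply: measurableI => //; exact: bigcap_measurableType.
Qed.

Lemma measurable_first_exit r n : measurable [set w | first_exit eta r w n].
Proof.
case: n => [|n].
  by rewrite (_ : [set _ | _] = set0)//; apply/seteqP; split => // w [].
have -> : [set w | first_exit eta r w n.+1] = ~` (eta n.+1 @^-1` [set r]) `&`
    \bigcap_(m in [set m | (0 < m < n.+1)%N]) eta m @^-1` [set r].
  by apply/seteqP; split => w /=; [case=> _ []|case=> en em].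
by apply: measurableI; [exact: measurableC|exact: bigcap_measurableType].
Qed.

Lemma measurable_red_event_kappa r j (A : set R) : measurable A ->
  measurable (red_event eta r j `&` [set w | A (red_kappa1 eta kappa r w)]).
Proof.
move=> mA.
have -> : red_event eta r j `&` [set w | A (red_kappa1 eta kappa r w)] =
    \bigcup_n ([set w | first_exit eta r w n] `&` eta n @^-1` [set j] `&`
               (fun w => \sum_(1 <= k < n.+1) kappa k w) @^-1` A).
  apply/seteqP; split => w.
  - by move=> [[xi0 ej] hA]; exists (red_xi1 eta r w) => //; have := red_xi1_first_exit xi0.
  - move=> [n _ [[exit_n ej] hA]].
    rewrite /red_event /red_eta1 /red_kappa1 /= (red_xi1_eq exit_n).
    by have [n0 _] := exit_n.
apply: bigcupT_measurable => n; apply: measurableI.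
  by apply: measurableI; [exact: measurable_first_exit|exact: meta].
by rewrite -[X in measurable X]setTI; exact: measurable_sum.
Qed.

End measurable_events.

Section markov_renewal.
Context {d} {T : measurableType d} {R : realType} {N : nat} {P : probability T R}.
Context {Q : 'I_N -> 'I_N -> {measure set R -> \bar R}} {i : 'I_N}.
Context {eta : nat -> T -> 'I_N} {kappa : nat -> T -> R}.
Hypothesis mrp : MRP_started P Q i eta kappa.

Lemma mrp_start_negligible : P.-negligible [set w | eta 0%N w <> i].
Proof.
have [meta _ _ _ fdd] := mrp.
have := fdd 0%N (fun _ => i) (fun _ => setT) erefl (fun _ => measurableT).
rewrite big_geq// (_ : [set w | _] = eta 0%N @^-1` [set i]); last first.
  by apply/seteqP; split => [w []//|w e0]; split => // k /andP[k0 k0']; lia.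
move=> start1; exists (~` (eta 0%N @^-1` [set i])); split => //.
- exact: measurableC.
- by rewrite probability_setC// start1 subee.
Qed.

Lemma mrp_path_cylinder_kappa (L : nat -> 'I_N) k (A : set R) :
  (0 < k)%N -> L 0%N = i -> measurable A ->
  P (path_cylinder eta i L k `&` kappa k @^-1` A) =
  (\prod_(1 <= m < k) Q (L m.-1) (L m) setT * Q (L k.-1) (L k) A)%E.
Proof.
move=> k0 L0 mA; have [_ _ _ _ fdd] := mrp.
have := fdd k L (fun m => if m == k then A else setT) L0
  (fun m => if m == k as b return measurable (if b then A else setT)
            then mA else measurableT).
rewrite big_nat_recr//= eqxx.
rewrite (@eq_big_nat _ _ _ 1 k _ (fun m => Q (L m.-1) (L m) setT)); last first.
  by move=> m /andP[_ mk]; rewrite ltn_eqF.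
move=> <-; congr (P _); apply/seteqP; split => w /=.
- move=> [[e0 em] hA]; split => // m hm; split; first exact: em.
  by case: eqP => [->//|_].
- move=> [e0 em]; split; first by split => // m hm; exact: (em m hm).1.
  by have := (em k _).2; rewrite eqxx; apply; rewrite k0 leqnn.
Qed.

Hypothesis Qle1 : forall a b, (Q a b setT <= 1)%E.

Let Qfin a b : Q a b setT \is a fin_num.
Proof. by rewrite ge0_fin_numE ?measure_ge0// (le_lt_trans (Qle1 a b)) ?ltry. Qed.

Lemma integral_path_cylinder_kappa (L : nat -> 'I_N) k :
  (0 < k)%N -> L 0%N = i ->
  (\int[P]_(w in path_cylinder eta i L k) (kappa k w)%:E =
   (\prod_(1 <= m < k) fine (Q (L m.-1) (L m) setT))%:E * trans_mean Q (L k.-1) (L k))%E.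
Proof.
move=> k0 L0; have [meta mkappa _ kappa_ge0 _] := mrp.
have c0 : 0 <= \prod_(1 <= m < k) fine (Q (L m.-1) (L m) setT).
  by apply: prodr_ge0 => m _; apply: fine_ge0; exact: measure_ge0.
rewrite (integral_restricted_law _ _ _ P (mscale (NngNum c0) (Q (L k.-1) (L k)))) => //.
- by rewrite ge0_integral_mscale//= => y; rewrite /= in_itv /= andbT lee_fin.
- exact: measurable_path_cylinder.
- move=> A mA _; apply: (eq_trans (mrp_path_cylinder_kappa _ _ _ k0 L0 mA)).
  transitivity
    ((\prod_(1 <= m < k) fine (Q (L m.-1) (L m) setT))%:E * Q (L k.-1) (L k) A)%E => //.
  by rewrite -prodEFin; congr (_ * _)%E; apply: eq_bigr => m _; rewrite fineK.
Qed.

Context {r : 'I_N}.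

Lemma red_Q_le0 j : (forall a b, Q a b `]-oo, 0]%classic = 0%E) ->
  red_Q P eta kappa r j `]-oo, 0]%classic = 0%E.
Proof.
move=> condB; have [meta mkappa _ kappa_ge0 _] := mrp.
apply: measure_negligible; first exact: measurable_red_event_kappa.
pose C l := path_cylinder eta i (fun m => if m == 0%N then i else l) 1 `&`
  kappa 1%N @^-1` `]-oo, 0]%classic.
apply: (@negligibleS _ _ _ P ([set w | eta 0%N w <> i] `|` \big[setU/set0]_(l < N) C l)).
- move=> w [[xi0 ej] kappa_le0].
  case: (pselect (eta 0%N w = i)) => e0; [right|by left].
  rewrite (bigD1 (eta 1%N w))//=; left; split.
    by split => // m /andP[m0 m1]; have -> : m = 1%N by lia.
  move: kappa_le0; rewrite /= /red_kappa1 !in_itv /= (big_ltn (m := 1%N)) ?ltnS//.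
  by apply: le_trans; rewrite lerDl; apply: sumr_ge0 => k _.
- apply: negligibleU; first exact: mrp_start_negligible.
  elim/big_ind: _ => [|A B|l _]; [exact: negligible_set0|exact: negligibleU|].
  exists (C l); split => //.
  + apply: measurableI; first exact: measurable_path_cylinder.
    by rewrite -[X in measurable X]setTI; exact: mkappa.
  + apply: (eq_trans (mrp_path_cylinder_kappa _ _ _ _ _ _)) => //.
    by rewrite big_geq// mul1e condB.
Qed.

Definition exit_path (l : 'I_N) (k m : nat) : 'I_N :=
  if m == 0%N then i else if (m < k)%N then r else l.

Definition kappa_on_exit_path (k : nat) (l : 'I_N) : T -> \bar R :=
  (fun w => (kappa k w)%:E) \_ (path_cylinder eta i (exit_path l k) k).

Lemma kappa_on_exit_path_ge0 k l w : (0 <= kappa_on_exit_path k l w)%E.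
Proof.
have [_ _ _ kappa_ge0 _] := mrp.
by rewrite /kappa_on_exit_path patchE; case: ifP; rewrite // lee_fin.
Qed.

Lemma measurable_kappa_on_exit_path k l : measurable_fun setT (kappa_on_exit_path k l).
Proof.
have [meta mkappa _ _ _] := mrp.
apply/(measurable_restrictT _ (measurable_path_cylinder meta _ _ _)).
by apply/measurable_EFinP; exact: measurable_funS (mkappa k).
Qed.

Lemma integral_kappa_on_exit_path1 l :
  (\int[P]_w kappa_on_exit_path 1 l w = trans_mean Q i l)%E.
Proof.
by rewrite -integral_mkcond integral_path_cylinder_kappa// big_geq// mul1e.
Qed.

Lemma prod_exit_path_le n l :
  \prod_(1 <= m < n.+2) fine (Q (exit_path l n.+2 m.-1) (exit_path l n.+2 m) setT)
  <= fine (Q r r setT) ^+ n.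
Proof.
have Qle1r a b : fine (Q a b setT) <= 1 by rewrite -lee_fin fineK.
rewrite big_ltn// (@eq_big_nat _ _ _ 2 n.+2 _ (fun _ => fine (Q r r setT))); last first.
  by move=> m /andP[]; case: m => [|[|m]]// _ mn; rewrite /exit_path (ltnW mn) mn.
by rewrite prodr_const_nat subSS subSS subn0; apply: ler_piMl.
Qed.

Lemma integral_kappa_on_exit_path_le n l :
  (\int[P]_w kappa_on_exit_path n.+2 l w <=
   (fine (Q r r setT) ^+ n)%:E * trans_mean Q r l)%E.
Proof.
rewrite -integral_mkcond integral_path_cylinder_kappa//.
rewrite /exit_path /= ltnSn ltnn; apply: lee_wpmul2r.
  by apply: integral_ge0 => t; rewrite /= in_itv /= andbT lee_fin.
by rewrite lee_fin; exact: prod_exit_path_le.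
Qed.

Definition exit_series (w : T) : \bar R :=
  \sum_(n <oo) \sum_(l < N) kappa_on_exit_path n.+1 l w.

Lemma exit_series_ge0 w : (0 <= exit_series w)%E.
Proof.
by apply: nneseries_ge0 => n _ _; apply: sume_ge0 => l _; exact: kappa_on_exit_path_ge0.
Qed.

Lemma red_kappa1_le_exit_series j w : eta 0%N w = i -> red_event eta r j w ->
  ((red_kappa1 eta kappa r w)%:E <= exit_series w)%E.
Proof.
move=> e0 [xi0 _]; set x := red_xi1 eta r w.
have [_ [_ before_x]] : first_exit eta r w x := red_xi1_first_exit xi0.
apply: le_trans (nneseries_lim_ge x _); last first.
  by move=> n _ _; apply: sume_ge0 => l _; exact: kappa_on_exit_path_ge0.
rewrite /red_kappa1 -/x -sumEFin big_add1 /= big_nat_cond [leRHS]big_nat_cond.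
apply: lee_sum => n /andP[/andP[_ nx] _].
rewrite (bigD1 (eta n.+1 w))//=; apply: le_trans (leeDl _ _); last first.
  by apply: sume_ge0 => l _; exact: kappa_on_exit_path_ge0.
rewrite /kappa_on_exit_path patchE mem_set//; split => // m /andP[m0 mn].
rewrite /exit_path (negbTE (lt0n_neq0 m0)).
case: ifPn => [mlt|mge]; first by apply: before_x; rewrite m0 (leq_trans mlt).
by have -> : m = n.+1 by lia.
Qed.

Lemma integral_exit_series_lt_pinfty : fine (Q r r setT) < 1 ->
  (forall a b, trans_mean Q a b < +oo)%E -> (\int[P]_w exit_series w < +oo)%E.
Proof.
move=> prr_lt1 condC.
have int_sum k : (\int[P]_w \sum_(l < N) kappa_on_exit_path k l w =
                  \sum_(l < N) \int[P]_w kappa_on_exit_path k l w)%E.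
  apply: (ge0_integral_sum P measurableT) => l.
    exact: measurable_kappa_on_exit_path.
  by move=> w _; exact: kappa_on_exit_path_ge0.
have mean_ge0 a b : (0 <= trans_mean Q a b)%E.
  by apply: integral_ge0 => t; rewrite /= in_itv /= andbT lee_fin.
have meanr_fin : (\sum_(l < N) trans_mean Q r l)%E \is a fin_num.
  by rewrite ge0_fin_numE ?lte_sum_pinfty// sume_ge0.
rewrite integral_nneseries//; first last.
- by move=> n w _; apply: sume_ge0 => l _; exact: kappa_on_exit_path_ge0.
- by move=> n; apply: emeasurable_sum => l; exact: measurable_kappa_on_exit_path.
apply: (nneseries_lt_pinfty_geometric _
  (fun n => \int[P]_w \sum_(l < N) kappa_on_exit_path n.+1 l w)%E
  (fine (\sum_(l < N) trans_mean Q r l)%E) (fine (Q r r setT))).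
- by rewrite prr_lt1 fine_ge0 ?measure_ge0.
- move=> n; apply: integral_ge0 => w _.
  by apply: sume_ge0 => l _; exact: kappa_on_exit_path_ge0.
- rewrite int_sum; apply: lte_sum_pinfty => l _.
  by rewrite integral_kappa_on_exit_path1; exact: condC.
- move=> n; rewrite int_sum EFinM fineK// muleC ge0_sume_distrr => [|l _].
    by apply: lee_sum => l _; exact: integral_kappa_on_exit_path_le.
  exact: mean_ge0.
Qed.

Lemma red_e_lt_pinfty j : fine (Q r r setT) < 1 ->
  (forall a b, trans_mean Q a b < +oo)%E -> (red_e P eta kappa r j < +oo)%E.
Proof.
move=> prr_lt1 condC; have [meta _ _ kappa_ge0 _] := mrp.
pose B := [set w | eta 0%N w <> i].
have mB : measurable B by exact: measurableC (meta 0%N i).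
(* Adding [+oo] on the null set [B] makes the domination hold everywhere
   without changing the integral. *)
pose h := cst (+oo%E : \bar R) \_ B.
have h_ge0 w : (0 <= h w)%E.
  by rewrite /h patchE; case: ifP => _; [exact: leey|exact: lexx].
have mh : measurable_fun setT h.
  by apply/(measurable_restrictT _ mB); exact: measurable_cst.
have int_h : (\int[P]_w h w = 0)%E.
  rewrite /h -integral_mkcond integral_cst//.
  by rewrite measure_negligible//; [exact: mule0|exact: mrp_start_negligible].
have mseries : measurable_fun setT exit_series.
  apply: ge0_emeasurable_sum => [n w _ _|n _].
    by apply: sume_ge0 => l _; exact: kappa_on_exit_path_ge0.
  by apply: emeasurable_sum => l; exact: measurable_kappa_on_exit_path.
rewrite /red_e integral_mkcond.
apply: (le_lt_trans (@ge0_le_integralT _ _ _ P _ (exit_series \+ h)%E _ _)).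
- by move=> w; rewrite patchE; case: ifP => _ //; rewrite lee_fin sumr_ge0.
- move=> w; rewrite patchE; case: ifPn => [/set_mem red_w|_]; last first.
    by rewrite adde_ge0// exit_series_ge0.
  rewrite /h patchE; case: ifPn => [_|/negP wB].
    by rewrite /= addey ?leey// gt_eqF// (lt_le_trans (ltNyr 0)) ?exit_series_ge0.
  rewrite /= adde0; apply: red_kappa1_le_exit_series red_w.
  by apply: contrapT => e0; apply: wB; rewrite inE.
rewrite (ge0_integralD P measurableT (fun w _ => exit_series_ge0 w) mseries
  (fun w _ => h_ge0 w) mh) int_h adde0.
exact: integral_exit_series_lt_pinfty.
Qed.

End markov_renewal.

Theorem lemma7 (R : realType) (N : nat)
  (Q : R -> 'I_N -> 'I_N -> {measure set R -> \bar R})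
  (eps0 : R) (Y : 'I_N -> {set 'I_N}) (r : 'I_N) :
  (* semi-Markov kernels for every eps in (0,1] *)
  (forall eps, 0 < eps <= 1 -> semi_markov_kernel (Q eps)) ->
  0 < eps0 <= 1 ->
  (* condition A *)
  (forall eps, 0 < eps <= eps0 -> forall i j,
      (j \in Y i -> (0 < Q eps i j setT)%E) /\ (j \notin Y i -> Q eps i j setT = 0%E)) ->
  (forall i j, exists (n : nat) (l : nat -> 'I_N),
      [/\ (0 < n)%N, l 0%N = i, l n = j & forall k, (k < n)%N -> l k.+1 \in Y (l k)]) ->
  (* condition B *)
  (forall eps, 0 < eps <= eps0 -> forall i j, Q eps i j `]-oo, 0]%classic = 0%E) ->
  (* condition C *)
  (forall eps, 0 < eps <= eps0 -> forall i j,
      (\int[Q eps i j]_(t in `[0%R, +oo[%classic) t%:E < +oo)%E) ->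
  (* conclusion: conditions B and C for the reduced process on X \ {r} *)
  forall eps, 0 < eps <= eps0 -> forall i j, i != r -> j != r ->
  forall (d : measure_display) (T : measurableType d) (P : probability T R)
         (eta : nat -> T -> 'I_N) (kappa : nat -> T -> R),
  MRP_started P (Q eps) i eta kappa ->
  red_Q P eta kappa r j `]-oo, 0]%classic = 0%E /\ (red_e P eta kappa r j < +oo)%E.
Proof.
move=> kernel /andP[_ eps0_le1] condA irreducible condB condC eps /[dup] eps_range.
(* The bounds hold for every target state [j]. *)
move=> /andP[eps_gt0 eps_le0] i j ir _ d T P eta kappa mrp.
have [_ Qsum] : semi_markov_kernel (Q eps).
  by apply: kernel; rewrite eps_gt0 (le_trans eps_le0 eps0_le1).
have prr_lt1 : fine (Q eps r r setT) < 1.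
  have [n [l [_ l0 ln lY]]] := irreducible r i.
  have lnr : l n != r by rewrite ln.
  have [m mn [lm lm1]] := exists_exit_step l0 lnr.
  apply: (kernel_stay_lt1 (Qsum r) _ lm1).
  by rewrite -lm; apply: (condA eps eps_range _ _).1; exact: lY mn.
split; first exact: (red_Q_le0 mrp j (condB eps eps_range)).
exact: (red_e_lt_pinfty mrp (fun a => kernel_mass_le1 (Qsum a)) j prr_lt1
  (condC eps eps_range)).
Qed.
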